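(* Let $p\ge 1711$ be a prime such that $-1$ is a quadratic residue modulo $p$ and $2,3$ are quadratic non-residues modulo $p$. Let $R'=R\setminus\{\tfrac{p+3}{2},\tfrac{p-3}{2}\}$ (elements of $\mathbb{F}_p$, i.e. $R'=R\setminus\{3/2,-3/2\}$). Let $\vec D$ be the digraph with vertex set $R'$ whose edges are: for every triple $x,y,z\in R'$ with $2x=y+z\neq 3$, the edges $(x,y)$ and $(x,z)$; and for every pair $y\neq z$ in $R'$ with $y+z=3$, the edges $(1,y)$ and $(1,z)$. Then $\vec D$ is strongly connected. Equivalently, the system of inequalities in variables $(x_a)_{a\in R'}$ $$2x_a\le x_b+x_c\ \ (a,b,c\in R',\ 2a=b+c\neq3),\qquad 3x_1\le x_b+x_c\ \ (b,c\in R',\ b+c=3),\qquad x_a>0\ \ (a\in R')$$ is strongly connected in the sense that its associated digraph (edges from the left-hand index to each right-hand index of every inequality) is strongly connected.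
   Context: $R$ denotes the set of nonzero quadratic residues in $\mathbb{F}_p$ (note $1\in R'$). All arithmetic is in $\mathbb{F}_p$. *)

From HB Require Import structures.
From mathcomp Require Import all_boot all_order all_algebra.
Unset Printing Implicit Defensive.
Import GRing.Theory.
Local Open Scope ring_scope.

Definition QR (p : nat) : {set 'F_p} :=
  [set x : 'F_p | (x != 0) && [exists y : 'F_p, y ^+ 2 == x]].

Definition Rp (p : nat) : {set 'F_p} :=
  QR p :\: [set (3%:R / 2%:R : 'F_p); - (3%:R / 2%:R)].

Definition Dedge (p : nat) : rel 'F_p := fun a b =>
  [&& a \in Rp p, b \in Rp p &
    [exists c : 'F_p,
      (c \in Rp p) &&
      (((2%:R * a == b + c) && (b + c != 3%:R))
       || [&& a == 1, c != b & b + c == 3%:R])]].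

Definition strongly_connected_D (p : nat) : Prop :=
  forall u v : 'F_p, u \in Rp p -> v \in Rp p -> connect (Dedge p) u v.

(* Only the "midpoint" edges x -> y (with z = 2x - y in R', and then
   automatically y + z = 2x <> 3 since x <> 3/2) are used.

   Suppose v is not reachable from u.  Let A be the set of vertices reachable
   from u and B = R' \ A; then A is closed under out-edges and B under
   in-edges.  With chi the quadratic character of F_p we show:
   - (degrees) since chi (-1) = 1 and chi 2 = -1, every vertex has at least
     (p - 17)/4 midpoint out- and in-neighbours: the number of x with x and
     a x + b both nonzero squares is computed exactly with Jacobi sums
     (count_QR_affine), and removing +-3/2 costs at most 4 of them;
   - (density) a nonempty X in which the pairs (x, y) with 2x - y a square
     number at least |X| (p - 17)/4 has more than (p - 1)/4 elements: the
     pair count is |X|^2 / 2 plus half a bilinear character sum, bounded by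
     |X| sqrt p / 2 via Cauchy-Schwarz (bilinear_chi_bound).
   Hence |A|, |B| > (p - 1)/4, contradicting |A| + |B| <= |QR| = (p - 1)/2.
   The file develops general finite-sum facts, then the quadratic character
   of F_p for an odd prime p, then the digraph argument. *)

From HB Require Import structures.
From mathcomp Require Import all_boot all_order all_algebra finfield.
From mathcomp Require Import zify ring.
Local Open Scope ring_scope.
Import Order.TTheory GRing.Theory Num.Theory.

Lemma sqr_sum_le {R : realDomainType} {I : finType} (X : {set I}) (T : I -> R) :
  (\sum_(x in X) T x) ^+ 2 <= #|X|%:R * \sum_(x in X) T x ^+ 2.
Proof.
set n : R := #|X|%:R; set S := \sum_(x in X) T x; set Q := \sum_(x in X) T x ^+ 2.
have var_ge0 : 0 <= \sum_(x in X) (n * T x - S) ^+ 2.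
  by apply: sumr_ge0 => x _; exact: sqr_ge0.
have var_eq : \sum_(x in X) (n * T x - S) ^+ 2 = n * (n * Q - S ^+ 2).
  rewrite (eq_bigr (fun x => n ^+ 2 * T x ^+ 2 - (2 * n * S) * T x + S ^+ 2));
    last by move=> x _; ring.
  rewrite big_split sumrB /= -!mulr_sumr sumr_const -/S -/Q -mulr_natr; ring.
have [X0 | /set0Pn[x0 x0X]] := eqVneq X set0.
  by rewrite /S /n X0 big_set0 cards0 expr0n mul0r.
have n_gt0 : 0 < n by rewrite ltr0n card_gt0; apply/set0Pn; exists x0.
by rewrite -subr_ge0 -(pmulr_rge0 _ n_gt0) -var_eq.
Qed.

Lemma card_set_int {T : finType} (P : pred T) :
  (#|[set x | P x]|)%:Z = \sum_(x : T) (if P x then 1 else 0).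
Proof.
rewrite -sum1_card big_mkcond /= (big_morph Posz PoszD (erefl _)).
by apply: eq_bigr => x _; rewrite inE; case: (P x).
Qed.

Lemma card_pairs_setD {T : finType} {f : T -> T} (S D : {set T}) : injective f ->
  (#|[set x | (x \in S) && (f x \in S)]|
    <= #|[set x | (x \in S :\: D) && (f x \in S :\: D)]| + 2 * #|D|)%N.
Proof.
move=> f_inj.
have sub : [set x | (x \in S) && (f x \in S)] \subset
    [set x | (x \in S :\: D) && (f x \in S :\: D)] :|: (D :|: f @^-1: D).
  apply/subsetP => x; rewrite !inE => /andP[xS fxS]; rewrite xS fxS !andbT.
  by case: (x \in D); case: (f x \in D).
apply: leq_trans (subset_leq_card sub) _.
apply: leq_trans (leq_card_setU _ _) _; rewrite leq_add2l.
by apply: leq_trans (leq_card_setU _ _) _; rewrite card_preimset // addnn mul2n.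
Qed.

Section QuadraticResidues.
Variable p : nat.
Hypothesis p_prime : prime p.
Hypothesis p_odd : odd p.
Local Notation F := 'F_p.

Definition euler_exp : nat := (p.-1)./2.

Lemma euler_exp_double : (euler_exp * 2 = p.-1)%N.
Proof.
have p_gt0 := prime_gt0 p_prime.
rewrite /euler_exp; move: p_odd; rewrite -(prednK p_gt0) /= => /negPf even_pred.
by rewrite -[RHS]odd_double_half even_pred add0n -muln2.
Qed.

Lemma euler_exp_gt0 : (0 < euler_exp)%N.
Proof. by move: euler_exp_double (odd_prime_gt2 p_odd p_prime); lia. Qed.

Lemma two_neq0 : (2%:R : F) != 0.
Proof.
rewrite -(dvdn_pcharf (pchar_Fp p_prime)); have := odd_prime_gt2 p_odd p_prime.
by apply: contraL => /(dvdn_leq (isT : (0 < 2)%N)); lia.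
Qed.

Lemma fermat_Fp (x : F) : x != 0 -> x ^+ p.-1 = 1.
Proof.
move=> x0; apply: (mulfI x0); rewrite mulr1 -exprS prednK ?prime_gt0 //.
by have := expf_card x; rewrite card_Fp.
Qed.

Lemma QR_euler (x : F) : x \in QR p -> x ^+ euler_exp = 1.
Proof.
rewrite inE => /andP[x0 /existsP[y /eqP yx]].
have y0 : y != 0 by apply: contraNneq x0 => y0; rewrite -yx y0 expr0n.
by rewrite -yx -exprM mulnC euler_exp_double fermat_Fp.
Qed.

(* The squaring map is at most 2-to-1 onto QR, so QR has at least (p-1)/2
   elements. *)
Lemma card_QR_ge : (euler_exp <= #|QR p|)%N.
Proof.
have card_units : #|[set y : F | y != 0]| = p.-1.
  have -> : [set y : F | y != 0] = [set~ 0] by apply/setP => y; rewrite !inE.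
  by rewrite cardsC1 card_Fp.
rewrite -(leq_pmul2r (isT : (0 < 2)%N)) euler_exp_double -card_units.
rewrite -sum1_card (partition_big (fun y : F => y ^+ 2) (mem (QR p))) /=; last first.
  move=> y; rewrite !inE => y0; rewrite expf_neq0 //=.
  by apply/existsP; exists y.
rewrite mulnC -sum1_card big_distrr /=; apply: leq_sum => x _; rewrite muln1 sum1_card.
case: (pickP [pred y : F | (y \in [set y | y != 0]) && (y ^+ 2 == x)]);
  last by move=> none; rewrite (eq_card0 none).
move=> y0 /= /andP[_ /eqP y0x].
apply: leq_trans (_ : #|[set y0; - y0]| <= 2)%N; last by rewrite cards2; case: (_ != _).
apply: subset_leq_card; apply/subsetP => y; rewrite !inE => /andP[_ /eqP yx].
by rewrite -eqf_sqr yx y0x.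
Qed.

(* A polynomial of degree (p-1)/2 has at most (p-1)/2 roots. *)
Lemma card_euler_roots : (#|[set x : F | x ^+ euler_exp == 1%R]| <= euler_exp)%N.
Proof.
rewrite cardE; apply: max_unity_roots; first exact: euler_exp_gt0.
  by apply/allP => y; rewrite mem_enum inE unity_rootE.
exact: enum_uniq.
Qed.

Lemma QR_roots : QR p = [set x : F | x ^+ euler_exp == 1].
Proof.
have sub : QR p \subset [set x : F | x ^+ euler_exp == 1].
  by apply/subsetP => x /QR_euler; rewrite inE => ->.
by apply/eqP; rewrite eqEcard sub (leq_trans card_euler_roots card_QR_ge).
Qed.

Lemma card_QR : #|QR p| = euler_exp.
Proof.
by apply/eqP; rewrite eqn_leq card_QR_ge andbT QR_roots card_euler_roots.
Qed.

Lemma euler_sqr {x : F} : x != 0 -> (x ^+ euler_exp) ^+ 2 = 1.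
Proof. by move=> x0; rewrite -exprM euler_exp_double fermat_Fp. Qed.

Definition chi (x : F) : int :=
  if x == 0 then 0 else if x ^+ euler_exp == 1 then 1 else -1.

Lemma chi0 : chi 0 = 0. Proof. by rewrite /chi eqxx. Qed.

Lemma chi1 : chi 1 = 1. Proof. by rewrite /chi oner_eq0 expr1n eqxx. Qed.

Lemma chi1E (x : F) : (chi x == 1) = (x \in QR p).
Proof.
rewrite QR_roots inE /chi; case: (x =P 0) => [->|_]; last by case: ifP.
by rewrite expr0n gtn_eqF ?euler_exp_gt0 // eq_sym oner_eq0.
Qed.

Lemma chi_pm1 {x : F} : x != 0 -> chi x = 1 \/ chi x = -1.
Proof. by rewrite /chi => /negPf ->; case: ifP; [left | right]. Qed.

Lemma chi_QR {x : F} : x \in QR p -> chi x = 1.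
Proof. by rewrite -chi1E => /eqP. Qed.

Lemma chi_nQR {x : F} : x != 0 -> x \notin QR p -> chi x = -1.
Proof. by move=> /chi_pm1[] // chix; rewrite -chi1E chix. Qed.

Lemma chiM (x y : F) : chi (x * y) = chi x * chi y.
Proof.
have [->|x0] := eqVneq x 0; first by rewrite mul0r chi0 mul0r.
have [->|y0] := eqVneq y 0; first by rewrite mulr0 chi0 mulr0.
have m1_neq1 : (-1 : F) != 1.
  by rewrite -subr_eq0 -opprD oppr_eq0 -(natrD F 1 1) two_neq0.
rewrite /chi mulf_eq0 (negPf x0) (negPf y0) /= exprMn.
move: (euler_sqr x0) (euler_sqr y0) => /eqP; rewrite sqrf_eq1 => + /eqP.
rewrite sqrf_eq1.
by case/orP=> /eqP ->; case/orP=> /eqP ->;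
  rewrite ?mulr1 ?mulrN1 ?mulrNN ?eqxx ?(negPf m1_neq1) ?opprK.
Qed.

Lemma chi_sqr {x : F} : x != 0 -> chi x * chi x = 1.
Proof. by case/chi_pm1 => ->. Qed.

Lemma chi_sqr_le1 (x : F) : chi x * chi x <= 1.
Proof. by rewrite /chi; case: ifP => //; case: ifP. Qed.

Lemma chiV (x : F) : chi x^-1 = chi x.
Proof.
have [->|x0] := eqVneq x 0; first by rewrite invr0.
by rewrite -[LHS]mul1r -(chi_sqr x0) -mulrA -chiM mulfV // chi1 mulr1.
Qed.

(* Since #|QR| = (p-1)/2 < p-1, the character takes the value -1. *)
Lemma exists_nonresidue : exists n : F, chi n = -1.
Proof.
have : ~~ ([set~ 0] \subset QR p).
  apply/negP => /subset_leq_card; rewrite cardsC1 card_Fp // card_QR.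
  by move: euler_exp_double euler_exp_gt0; lia.
by case/subsetPn => n; rewrite in_setC1 => n0 nQR; exists n; exact: chi_nQR.
Qed.

(* chi is a nontrivial character, so it sums to 0 over F_p. *)
Lemma sum_chi : \sum_(x : F) chi x = 0.
Proof.
have [n chin] := exists_nonresidue.
have n0 : n != 0 by apply: contra_eqN chin => /eqP ->; rewrite chi0.
have : \sum_(x : F) chi x = - \sum_(x : F) chi x.
  rewrite {1}(reindex_inj (mulfI n0)) /= -mulN1r mulr_sumr.
  by apply: eq_bigr => x _; rewrite chiM chin.
by move/eqP; rewrite -subr_eq0 opprK -mulr2n mulrn_eq0 => /eqP.
Qed.

(* The same over any line x |-> a x + b, a bijection of F_p. *)
Lemma sum_chi_affine (a b : F) : a != 0 -> \sum_(x : F) chi (a * x + b) = 0.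
Proof.
move=> a0; rewrite -[RHS]sum_chi [RHS](reindex_inj (_ : injective (fun x => a * x + b))) //.
by move=> x y /addIr /(mulfI a0).
Qed.

(* The Jacobi sum of chi with itself, computed through the substitution
   x = 1/t, which turns it into a sum of chi over a line. *)
Lemma jacobi_sum (c : F) : c != 0 -> \sum_(x : F) chi x * chi (x + c) = -1.
Proof.
move=> c0; rewrite (reindex_inj (@invr_inj F)) /= (bigD1 0) //= invr0 chi0 mul0r add0r.
have := @sum_chi_affine c 1 c0; rewrite (bigD1 0) //= mulr0 add0r chi1 => /eqP.
rewrite addrC addr_eq0 => /eqP <-; apply: eq_bigr => t t0.
have -> : t^-1 + c = t^-1 * (c * t + 1) by field.
by rewrite chiM mulrA chi_sqr ?invr_eq0 // mul1r.
Qed.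

Lemma jacobi_sum_shift (a b : F) : a != b ->
  \sum_(x : F) chi (x - a) * chi (x - b) = -1.
Proof.
move=> ab; rewrite (reindex_inj (addIr a)) /= -(@jacobi_sum (a - b)) ?subr_eq0 //.
by apply: eq_bigr => x _; rewrite addrK addrA.
Qed.

(* Number of points x on which both x and a x + b are nonzero squares,
   obtained by summing (1 + chi x) (1 + chi (a x + b)) over F_p. *)
Lemma count_QR_affine {a b : F} : a != 0 -> b != 0 ->
  4 * (#|[set x : F | (x \in QR p) && (a * x + b \in QR p)]|)%:Z
    = p%:Z - 2 - chi a - chi b - chi (- (a * b)).
Proof.
move=> a0 b0; set z := - (b / a).
have az : a * z + b = 0 by rewrite /z mulrN mulrC divfK // addNr.
have z0 : z != 0 by rewrite oppr_eq0 mulf_neq0 ?invr_eq0.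
have chiz : chi z = chi (- (a * b)) by rewrite /z -mulNr chiM chiV -chiM mulNr mulrC.
have notQR0 : 0 \notin QR p by rewrite -chi1E chi0.
have pointwise x : (1 + chi x) * (1 + chi (a * x + b)) =
    4 * (if (x \in QR p) && (a * x + b \in QR p) then 1 else 0)
    + (if x == 0 then 1 + chi b else 0) + (if x == z then 1 + chi z else 0).
  have [->|x0] := eqVneq x 0.
    by rewrite mulr0 add0r (negPf notQR0) chi0 eq_sym (negPf z0) add0r mul1r !addr0.
  have [->|xz] := eqVneq x z; first by rewrite az (negPf notQR0) andbF chi0 !addr0 mulr1 add0r.
  have y0 : a * x + b != 0.
    by apply: contra xz => /eqP axb; apply/eqP/(mulfI a0)/(addIr b); rewrite axb az.
  by rewrite -!chi1E; case: (chi_pm1 x0) => ->; case: (chi_pm1 y0) => ->.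
have sum_mixed : \sum_(x : F) chi x * chi (a * x + b) = - chi a.
  have shift x : a * x + b = a * (x + b / a) by field.
  under eq_bigr => x _ do rewrite shift chiM mulrCA.
  by rewrite -mulr_sumr jacobi_sum ?mulrN1 // mulf_neq0 ?invr_eq0.
have sum_f : \sum_(x : F) (1 + chi x) * (1 + chi (a * x + b)) = p%:Z - chi a.
  under eq_bigr => x _ do rewrite mulrDl !mul1r mulrDr mulr1.
  rewrite !big_split /= sum_chi sum_chi_affine // sum_mixed sumr_const card_Fp //.
  by rewrite add0r addr0 -mulr_natr mul1r natz.
move: sum_f; under eq_bigr => x _ do rewrite pointwise.
rewrite !big_split /= -mulr_sumr -card_set_int.
rewrite -!big_mkcond /= !big_pred1_eq chiz => sum_f.
by rewrite -(subrK (chi (- (a * b))) (4 * _)); move: sum_f; lia.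
Qed.

(* Near-orthogonality of the translates of chi (Jacobi sums are -1):
   the sums u |-> sum_{y in Y} chi (u - y) have second moment <= p |Y|. *)
Lemma second_moment_le (Y : {set F}) :
  \sum_(u : F) (\sum_(y in Y) chi (u - y)) ^+ 2 <= p%:Z * #|Y|%:Z.
Proof.
have expand : \sum_(u : F) (\sum_(y in Y) chi (u - y)) ^+ 2 =
    \sum_(y in Y) \sum_(y' in Y) \sum_(u : F) chi (u - y) * chi (u - y').
  under eq_bigr => u _ do rewrite expr2 mulr_suml; rewrite exchange_big /=.
  by apply: eq_bigr => y _; under eq_bigr => u _ do rewrite mulr_sumr; rewrite exchange_big.
have diag_le y : \sum_(u : F) chi (u - y) * chi (u - y) <= p%:Z.
  apply: le_trans (_ : \sum_(u : F) (1 : int) <= _); first by apply: ler_sum => u _; exact: chi_sqr_le1.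
  by rewrite sumr_const card_Fp // natz.
rewrite expand; apply: le_trans (_ : \sum_(y in Y) p%:Z <= _); last first.
  by rewrite sumr_const -mulr_natr natz.
apply: ler_sum => y yY; rewrite (bigD1 y) //= -[X in _ <= X]addr0.
apply: lerD; first exact: diag_le.
by apply: sumr_le0 => y' /andP[_ y'y]; rewrite jacobi_sum_shift // eq_sym.
Qed.

(* Bilinear character-sum bound, by Cauchy-Schwarz over x and the
   second-moment bound (x |-> a x is a bijection of F_p). *)
Lemma bilinear_chi_bound (a : F) (X Y : {set F}) : a != 0 ->
  (\sum_(x in X) \sum_(y in Y) chi (a * x - y)) ^+ 2 <= #|X|%:Z * (p%:Z * #|Y|%:Z).
Proof.
move=> a0; apply: le_trans (sqr_sum_le X _) _; rewrite natz.
apply: ler_wpM2l => //; apply: le_trans (second_moment_le Y).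
rewrite [X in _ <= X](reindex_inj (mulfI a0)) /= [X in _ <= X](bigID (mem X)) /= lerDl.
by apply: sumr_ge0 => x _; exact: sqr_ge0.
Qed.

Definition midpoint_pairs (X : {set F}) : nat :=
  (\sum_(x in X) #|[set y in X | (2%:R * x - y)%R \in QR p]|)%N.

Lemma QR_indicator_le (z : F) : 2 * (if z \in QR p then 1 else 0) <= 1 + chi z.
Proof.
rewrite -chi1E; have [->|z0] := eqVneq z 0; first by rewrite chi0.
by case: (chi_pm1 z0) => ->.
Qed.

Lemma midpoint_pairs_le (X : {set F}) :
  2 * (midpoint_pairs X)%:Z
    <= #|X|%:Z ^+ 2 + \sum_(x in X) \sum_(y in X) chi (2%:R * x - y).
Proof.
rewrite /midpoint_pairs (big_morph Posz PoszD (erefl _)) mulr_sumr.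
have -> : #|X|%:Z ^+ 2 = \sum_(x in X) \sum_(y in X) 1.
  by rewrite !sumr_const -mulrnA expr2 -PoszM -natz.
rewrite -big_split /=; apply: ler_sum => x _; rewrite -big_split /=.
rewrite card_set_int [X in _ <= X]big_mkcond mulr_sumr /=; apply: ler_sum => y _.
by case: (y \in X); rewrite ?mulr0 ?addr0 //; exact: QR_indicator_le.
Qed.

Lemma midpoint_pairs_exchange (X : {set F}) :
  midpoint_pairs X = (\sum_(y in X) #|[set x in X | (2%:R * x - y)%R \in QR p]|)%N.
Proof.
have card_sum (P : pred F) : #|[set z in X | P z]| = (\sum_(z in X) P z)%N.
  rewrite -sum1_card big_mkcond [RHS]big_mkcond; apply: eq_bigr => z _.
  by rewrite inE; case: (z \in X); case: (P z).
rewrite /midpoint_pairs; under eq_bigr => x _ do rewrite card_sum.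
by rewrite exchange_big; apply: eq_bigr => y _; rewrite card_sum.
Qed.

(* If every x in X has on average at least (p - 17)/4 midpoint partners in
   X, then X contains more than a quarter of F_p^*: otherwise the main term
   |X|^2 / 2 of the pair count is too small, and the error term
   |X| sqrt p too large, to account for that many pairs. *)
Lemma many_midpoint_pairs_large (X : {set F}) : (67 <= p)%N -> X != set0 ->
  (#|X| * (p - 17) <= 4 * midpoint_pairs X)%N -> (p.-1 < 4 * #|X|)%N.
Proof.
move=> p_ge X0 dense; rewrite ltnNge; apply/negP => small.
have n_gt0 : 0 < #|X|%:Z by rewrite ltz_nat card_gt0.
have := midpoint_pairs_le X; have := bilinear_chi_bound _ X X two_neq0.
have p17 : (17 <= p)%N by apply: leq_trans p_ge.
move: dense small p_ge; rewrite -!lez_nat !PoszM -subzn // predn_int ?prime_gt0 //.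
set S := \sum_(x in X) _; set M := (midpoint_pairs X)%:Z; set n := #|X|%:Z; set q := p%:Z.
move=> dense small p_ge S_sqr M_le.
set t := q - 17 - 2 * n.
have t_ge : q - 33 <= 2 * t by rewrite /t; lia.
have t_gt0 : 0 < t by lia.
have t_le : n * t <= 2 * S.
  have -> : n * t = n * (q - 17) - 2 * n ^+ 2 by rewrite /t; ring.
  by move: dense M_le; lia.
have t_sqr : t ^+ 2 <= 4 * q.
  have n2_gt0 : 0 < n ^+ 2 by rewrite exprn_gt0.
  rewrite -(ler_pM2l n2_gt0) -exprMn; apply: le_trans (_ : (2 * S) ^+ 2 <= _).
    have nt_ge0 : 0 <= n * t by rewrite mulr_ge0 // ltW.
    by rewrite ler_pXn2r // nnegrE // (le_trans nt_ge0 t_le).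
  by rewrite exprMn; move: S_sqr; rewrite !expr2; lia.
have : (q - 33) ^+ 2 <= 16 * q.
  apply: le_trans (_ : (2 * t) ^+ 2 <= _); last by rewrite exprMn; lia.
  by rewrite ler_pXn2r // nnegrE; lia.
have q67 : 0 <= q - 67 by lia.
have q15 : 0 <= q - 15 by lia.
by have := mulr_ge0 q67 q15; rewrite expr2; lia.
Qed.

Hypothesis m1_QR : (-1 : F) \in QR p.
Hypothesis two_nQR : (2%:R : F) \notin QR p.

Lemma chi_m1 : chi (-1) = 1. Proof. exact: chi_QR. Qed.
Lemma chi_two : chi 2%:R = -1. Proof. exact: chi_nQR two_neq0 two_nQR. Qed.

Lemma chiN (x : F) : chi (- x) = chi x.
Proof. by rewrite -mulN1r chiM chi_m1 mul1r. Qed.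

Lemma Rp_QR {x : F} : x \in Rp p -> x \in QR p.
Proof. by rewrite inE => /andP[]. Qed.

(* When chi a + chi b + chi (- a b) = -1, count_QR_affine gives exactly
   (p - 1)/4 points; removing the two points +-3/2 from QR loses at most
   4 of them, since x |-> a x + b is injective. *)
Lemma Rp_affine_degree (a b : F) : a != 0 -> b != 0 ->
  chi a + chi b + chi (- (a * b)) = -1 ->
  (p - 17 <= 4 * #|[set x | (x \in Rp p) && ((a * x + b)%R \in Rp p)]|)%N.
Proof.
move=> a0 b0 chi_sum; rewrite /Rp; set D := [set _; _].
have f_inj : injective (fun x : F => a * x + b) by move=> x y /addIr /(mulfI a0).
have removed : (#|[set x | (x \in QR p) && ((a * x + b)%R \in QR p)]|
    <= #|[set x | (x \in QR p :\: D) && ((a * x + b)%R \in QR p :\: D)]| + 4)%N.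
  apply: leq_trans (card_pairs_setD (QR p) D f_inj) _; apply: leq_add => //.
  by rewrite cards2; case: (_ != _).
have count : (4 * #|[set x | (x \in QR p) && ((a * x + b)%R \in QR p)]| = p.-1)%N.
  apply/eqP; rewrite -eqz_nat PoszM (count_QR_affine a0 b0) predn_int ?prime_gt0 //.
  by apply/eqP; move: chi_sum; lia.
by move: count removed; lia.
Qed.

Lemma out_degree {x : F} : x \in Rp p ->
  (p - 17 <= 4 * #|[set y | (y \in Rp p) && ((2%:R * x - y)%R \in Rp p)]|)%N.
Proof.
move=> xR; have chix := chi_QR (Rp_QR xR).
have x0 : x != 0 by apply: contra_eqN chix => /eqP ->; rewrite chi0.
have -> : [set y | (y \in Rp p) && ((2%:R * x - y)%R \in Rp p)]
    = [set y | (y \in Rp p) && ((-1 * y + 2%:R * x)%R \in Rp p)].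
  by apply: eq_finset => y; rewrite mulN1r addrC.
apply: Rp_affine_degree; rewrite ?oppr_eq0 ?oner_eq0 ?mulf_neq0 ?two_neq0 //.
by rewrite mulN1r opprK chiM chi_m1 chi_two chix.
Qed.

Lemma in_degree {y : F} : y \in Rp p ->
  (p - 17 <= 4 * #|[set x | (x \in Rp p) && ((2%:R * x - y)%R \in Rp p)]|)%N.
Proof.
move=> yR; have chiy := chi_QR (Rp_QR yR).
have y0 : y != 0 by apply: contra_eqN chiy => /eqP ->; rewrite chi0.
apply: Rp_affine_degree; rewrite ?oppr_eq0 ?two_neq0 //.
by rewrite mulrN opprK chiN chiM chi_two chiy.
Qed.

(* A midpoint triple 2x = y + z in R' yields the edge x -> y of D,
   because x != 3/2 forces y + z != 3. *)
Lemma midpoint_edge {x y : F} :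
  x \in Rp p -> y \in Rp p -> 2%:R * x - y \in Rp p -> Dedge p x y.
Proof.
move=> xR yR zR; rewrite /Dedge xR yR /=; apply/existsP; exists (2%:R * x - y).
rewrite zR addrC subrK eqxx /=; apply/orP; left.
move: xR; rewrite in_setD in_set2 negb_or => /andP[/andP[x32 _] _].
apply: contra x32 => /eqP two_x; apply/eqP.
by rewrite -two_x mulrAC divff ?two_neq0 // mul1r.
Qed.

(* A nonempty set of vertices closed under midpoint out-edges contains more
   than a quarter of F_p^*: all out-neighbours of its points stay inside. *)
Lemma out_closed_large (A : {set F}) : (67 <= p)%N -> A != set0 -> A \subset Rp p ->
  (forall x y, x \in A -> y \in Rp p -> 2%:R * x - y \in Rp p -> y \in A) ->
  (p.-1 < 4 * #|A|)%N.
Proof.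
move=> p_ge A0 AR closed; apply: many_midpoint_pairs_large => //.
rewrite /midpoint_pairs -sum_nat_const big_distrr /=; apply: leq_sum => x xA.
apply: leq_trans (out_degree (subsetP AR x xA)) _; rewrite leq_mul2l /=.
apply: subset_leq_card; apply/subsetP => y; rewrite in_set => /andP[yR zR]; rewrite in_set.
by rewrite (closed x y xA yR zR) (Rp_QR zR).
Qed.

Lemma in_closed_large (B : {set F}) : (67 <= p)%N -> B != set0 -> B \subset Rp p ->
  (forall x y, y \in B -> x \in Rp p -> 2%:R * x - y \in Rp p -> x \in B) ->
  (p.-1 < 4 * #|B|)%N.
Proof.
move=> p_ge B0 BR closed; apply: many_midpoint_pairs_large => //.
rewrite midpoint_pairs_exchange -sum_nat_const big_distrr /=; apply: leq_sum => y yB.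
apply: leq_trans (in_degree (subsetP BR y yB)) _; rewrite leq_mul2l /=.
apply: subset_leq_card; apply/subsetP => x; rewrite in_set => /andP[xR zR]; rewrite in_set.
by rewrite (closed x y yB xR zR) (Rp_QR zR).
Qed.

(* If v were not reachable from u, the vertices reachable from u and the
   remaining ones would form two disjoint large subsets of R', whose sizes
   add up to more than #|QR| = (p - 1)/2. *)
Lemma midpoint_digraph_strongly_connected : (67 <= p)%N -> strongly_connected_D p.
Proof.
move=> p_ge u v uR vR; apply/idPn => not_uv.
set A := [set w in Rp p | connect (Dedge p) u w].
set B := Rp p :\: A.
have AR : A \subset Rp p by apply/subsetP => w; rewrite inE => /andP[].
have A_closed x y : x \in A -> y \in Rp p -> 2%:R * x - y \in Rp p -> y \in A.
  rewrite inE => /andP[xR ux] yR zR.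
  by rewrite inE yR (connect_trans ux (connect1 (midpoint_edge xR yR zR))).
have B_closed x y : y \in B -> x \in Rp p -> 2%:R * x - y \in Rp p -> x \in B.
  rewrite [y \in B]in_setD [x \in B]in_setD => /andP[yA yR] xR zR; rewrite xR andbT.
  by apply: contraNN yA => xA; exact: A_closed xA yR zR.
have A_large : (p.-1 < 4 * #|A|)%N.
  apply: out_closed_large => //; apply/set0Pn; exists u.
  by rewrite inE uR connect0.
have B_large : (p.-1 < 4 * #|B|)%N.
  apply: in_closed_large => //; first (apply/set0Pn; exists v).
    by rewrite in_setD vR andbT inE vR.
  exact: subsetDl.
have AB : (#|A| + #|B| <= euler_exp)%N.
  have -> : (#|A| + #|B| = #|Rp p|)%N by rewrite -(cardsID A (Rp p)) (setIidPr AR).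
  by rewrite -card_QR subset_leq_card // subsetDl.
by move: A_large B_large AB euler_exp_double; lia.
Qed.
End QuadraticResidues.

(* The density argument only needs p >= 67; a prime p >= 1711 is odd. *)
Theorem lemma2p6 (p : nat) (hp : prime p) (hp1711 : (1711 <= p)%N)
  (hm1 : (-1 : 'F_p) \in QR p)
  (h2 : (2%:R : 'F_p) \notin QR p)
  (h3 : (3%:R : 'F_p) \notin QR p) :
  strongly_connected_D p.
Proof.
have p_odd : odd p by case: (even_prime hp) hp1711 => [-> //|].
exact: midpoint_digraph_strongly_connected hp p_odd hm1 h2 (leq_trans _ hp1711).
Qed.
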